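(* For all integers $m,k\ge 0$, $$\int_0^{\pi/2} x^{2m}\frac{\sin(2kx)}{\sin(x)}\,dx=2(2m)!\sum_{j=0}^m\frac{(-1)^j\,\overline{O}_k^{(2j+1)}}{(2m-2j)!}\left(\frac{\pi}{2}\right)^{2m-2j}.$$
   Context: For integers $k\ge 0$ and $r\ge1$, the alternating odd harmonic number is $\overline{O}_k^{(r)}=\sum_{i=1}^k\frac{(-1)^{i-1}}{(2i-1)^r}$ (empty sum $=0$). *)

From Stdlib Require Import Reals.
From Coquelicot Require Import Coquelicot.
Open Scope R_scope.

(* Alternating odd harmonic number:
   altOddHarm k r = sum_{i=1}^k (-1)^(i-1) / (2i-1)^r  (empty sum = 0). *)
Fixpoint altOddHarm (k r : nat) : R :=
  match k with
  | O => 0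
  | S k' => altOddHarm k' r + (-1) ^ k' / (INR (2 * k' + 1)) ^ r
  end.

From Stdlib Require Import Reals Lra Lia.
From Coquelicot Require Import Coquelicot.
Open Scope R_scope.

(* Since sin (2 k x) = 2 sin x (cos x + cos 3x + ... + cos (2k-1) x), the
   integrand is 2 x^(2m) times a sum of odd cosines.  Integrating by parts
   twice gives a recursion for the moments of x^(2m) cos (a x); at b = PI/2
   with a = 2i+1 every cosine term vanishes and sin (a b) = (-1)^i, so the
   moment is an alternating finite sum in the powers 1/a^(2j+1).  Summing
   over i collects these powers into the alternating odd harmonic numbers. *)

Fixpoint pow_cos_primitive (a : R) (m : nat) (x : R) : R :=
  match m with
  | O => sin (a * x) / a
  | S m' => x ^ (2 * m' + 2) * sin (a * x) / a
            + INR (2 * m' + 2) * x ^ (2 * m' + 1) * cos (a * x) / (a * a)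
            - INR (2 * m' + 2) * INR (2 * m' + 1) / (a * a) * pow_cos_primitive a m' x
  end.

Lemma is_derive_pow_cos_primitive a m x : a <> 0 ->
  is_derive (pow_cos_primitive a m) x (x ^ (2 * m) * cos (a * x)).
Proof.
intros Ha; revert x; induction m as [|m IH]; intros x.
- simpl; auto_derive; auto. field; auto.
- set (c := INR (2 * m + 2) * INR (2 * m + 1) / (a * a)).
  replace (x ^ (2 * S m) * cos (a * x)) with
    ((x ^ (2 * m + 2) * cos (a * x) + c * (x ^ (2 * m) * cos (a * x)))
     - c * (x ^ (2 * m) * cos (a * x))).
  2: { replace (2 * S m)%nat with (2 * m + 2)%nat by lia. ring. }
  apply (is_derive_minus
    (fun x => x ^ (2 * m + 2) * sin (a * x) / a
              + INR (2 * m + 2) * x ^ (2 * m + 1) * cos (a * x) / (a * a))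
    (fun x => c * pow_cos_primitive a m x)).
  + unfold c; auto_derive; auto.
    replace (Init.Nat.pred (m + (m + 0) + 2)) with (2 * m + 1)%nat by lia.
    replace (Init.Nat.pred (m + (m + 0) + 1)) with (2 * m)%nat by lia.
    replace (m + (m + 0) + 2)%nat with (2 * m + 2)%nat by lia.
    replace (m + (m + 0) + 1)%nat with (2 * m + 1)%nat by lia.
    replace (x ^ (2 * m + 2)) with (x ^ (2 * m) * x * x) by (rewrite pow_add; simpl; ring).
    replace (x ^ (2 * m + 1)) with (x ^ (2 * m) * x) by (rewrite pow_add; simpl; ring).
    field; auto.
  + apply (is_derive_scal (pow_cos_primitive a m)), IH.
Qed.

Lemma pow_cos_primitive_0 a m : pow_cos_primitive a m 0 = 0.
Proof.
induction m as [|m IH]; simpl pow_cos_primitive.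
- rewrite Rmult_0_r, sin_0; unfold Rdiv; ring.
- rewrite IH, Rmult_0_r, sin_0, !pow_i by lia; unfold Rdiv; ring.
Qed.

Lemma pow_cos_primitive_cos_root a m b : a <> 0 -> cos (a * b) = 0 ->
  pow_cos_primitive a m b = sin (a * b) * INR (Factorial.fact (2 * m)) *
    sum_f_R0 (fun j => (-1) ^ j / a ^ (2 * j + 1) / INR (Factorial.fact (2 * m - 2 * j))
                       * b ^ (2 * m - 2 * j)) m.
Proof.
intros Ha Hc; induction m as [|m IH].
- simpl; field; auto.
- cbn [pow_cos_primitive]; rewrite IH, Hc.
  rewrite (decomp_sum _ (S m)) by lia; simpl pred.
  rewrite (sum_eq
    (fun i => (-1) ^ S i / a ^ (2 * S i + 1) / INR (Factorial.fact (2 * S m - 2 * S i))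
              * b ^ (2 * S m - 2 * S i))
    (fun i => (-1) ^ i / a ^ (2 * i + 1) / INR (Factorial.fact (2 * m - 2 * i))
              * b ^ (2 * m - 2 * i) * (-1 / (a * a)))).
  2: { intros i _.
       replace (2 * S m - 2 * S i)%nat with (2 * m - 2 * i)%nat by lia.
       replace (2 * S i + 1)%nat with (S (S (2 * i + 1))) by lia; simpl pow.
       field; repeat split; try apply INR_fact_neq_0; try apply pow_nonzero; auto. }
  rewrite <- scal_sum.
  replace (2 * S m - 2 * 0)%nat with (S (S (2 * m))) by lia.
  replace (2 * S m)%nat with (S (S (2 * m))) by lia.
  replace (2 * m + 2)%nat with (S (S (2 * m))) by lia.
  replace (2 * m + 1)%nat with (S (2 * m)) by lia.
  rewrite !fact_simpl, !mult_INR. replace ((-1) ^ 0) with 1 by reflexivity. replace (2 * 0 + 1)%nat with 1%nat by reflexivity.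
  field; repeat split; try apply INR_fact_neq_0; try apply not_0_INR; try lia; auto.
Qed.

Lemma is_RInt_pow_cos a m b : a <> 0 ->
  is_RInt (fun x => x ^ (2 * m) * cos (a * x)) 0 b (pow_cos_primitive a m b).
Proof.
intros Ha.
replace (pow_cos_primitive a m b)
  with (pow_cos_primitive a m b - pow_cos_primitive a m 0)
  by (rewrite pow_cos_primitive_0; ring).
apply (is_RInt_derive (pow_cos_primitive a m)).
- intros x _; apply is_derive_pow_cos_primitive; auto.
- intros x _.
  apply (ex_derive_continuous (K := R_AbsRing) (V := R_NormedModule)).
  auto_derive; auto.
Qed.

Lemma sin_cos_odd_mult_PI2 i :
  sin (INR (2 * i + 1) * (PI / 2)) = (-1) ^ i /\ cos (INR (2 * i + 1) * (PI / 2)) = 0.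
Proof.
induction i as [|i [IHs IHc]].
- simpl; rewrite Rmult_1_l, sin_PI2, cos_PI2; auto.
- replace (INR (2 * S i + 1) * (PI / 2)) with (INR (2 * i + 1) * (PI / 2) + PI).
  2: { rewrite !plus_INR, !mult_INR, !S_INR; simpl; field. }
  rewrite neg_sin, neg_cos, IHs, IHc; simpl; split; ring.
Qed.

Fixpoint odd_cos_sum (k : nat) (x : R) : R :=
  match k with
  | O => 0
  | S k' => odd_cos_sum k' x + cos (INR (2 * k' + 1) * x)
  end.

Lemma sin_even_mult k x : sin (2 * INR k * x) = 2 * sin x * odd_cos_sum k x.
Proof.
induction k as [|k IH].
- simpl; rewrite Rmult_0_r, Rmult_0_l, sin_0; ring.
- cbn [odd_cos_sum]; rewrite Rmult_plus_distr_l, <- IH.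
  replace (2 * INR (S k) * x) with (INR (2 * k + 1) * x + x)
    by (rewrite plus_INR, mult_INR, (S_INR k); simpl; ring).
  replace (2 * INR k * x) with (INR (2 * k + 1) * x - x)
    by (rewrite plus_INR, mult_INR; simpl; ring).
  rewrite sin_plus, sin_minus; ring.
Qed.

Lemma is_RInt_pow_odd_cos_sum m k :
  is_RInt (fun x => x ^ (2 * m) * (2 * odd_cos_sum k x)) 0 (PI / 2)
    (2 * INR (Factorial.fact (2 * m)) *
     sum_f_R0 (fun j => (-1) ^ j * altOddHarm k (2 * j + 1) / INR (Factorial.fact (2 * m - 2 * j))
                        * (PI / 2) ^ (2 * m - 2 * j)) m).
Proof.
induction k as [|k IH].
- apply (is_RInt_ext (fun _ => 0)); [intros x _; simpl; ring|].
  replace (2 * _ * _) with (scal (PI / 2 - 0) 0).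
  + apply (is_RInt_const (V := R_NormedModule)).
  + rewrite sum_eq_R0; [unfold scal; simpl; unfold mult; simpl; ring|].
    intros j _; simpl; unfold Rdiv; ring.
- destruct (sin_cos_odd_mult_PI2 k) as [Hs Hc].
  set (a := INR (2 * k + 1)) in *.
  assert (Ha : a <> 0) by (apply not_0_INR; lia).
  pose proof (is_RInt_scal _ _ _ 2 _ (is_RInt_pow_cos a m (PI / 2) Ha)) as Hcos.
  rewrite (pow_cos_primitive_cos_root a m (PI / 2) Ha Hc), Hs in Hcos.
  pose proof (is_RInt_plus _ _ _ _ _ _ IH Hcos) as Hsum.
  match type of Hsum with is_RInt _ _ _ ?v => replace (2 * _ * _) with v end.
  + revert Hsum; apply is_RInt_ext; intros x _; cbn [odd_cos_sum]; unfold a.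
    unfold scal, plus; simpl; unfold mult, plus; simpl; ring.
  + symmetry; rewrite (sum_eq _ (fun j =>
      (-1) ^ j * altOddHarm k (2 * j + 1) / INR (Factorial.fact (2 * m - 2 * j))
        * (PI / 2) ^ (2 * m - 2 * j)
      + (-1) ^ j / a ^ (2 * j + 1) / INR (Factorial.fact (2 * m - 2 * j))
        * (PI / 2) ^ (2 * m - 2 * j) * (-1) ^ k))
      by (intros j _; cbn [altOddHarm]; unfold a; unfold Rdiv; ring).
    rewrite plus_sum, <- scal_sum.
    unfold scal, plus; simpl; unfold mult, plus; simpl; ring.
Qed.

Theorem lemma1 (m k : nat) :
  is_RInt (fun x : R => x ^ (2 * m) * (sin (2 * INR k * x) / sin x)) 0 (PI / 2)
    (2 * INR (Factorial.fact (2 * m)) *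
     sum_f_R0 (fun j : nat =>
        (-1) ^ j * altOddHarm k (2 * j + 1) / INR (Factorial.fact (2 * m - 2 * j))
        * (PI / 2) ^ (2 * m - 2 * j)) m).
Proof.
apply (is_RInt_ext (fun x => x ^ (2 * m) * (2 * odd_cos_sum k x))).
- intros x Hx; pose proof PI_RGT_0.
  rewrite Rmin_left, Rmax_right in Hx by lra.
  assert (Hsin : 0 < sin x) by (apply sin_gt_0; lra).
  rewrite sin_even_mult; apply Rmult_eq_compat_l; field; lra.
- apply is_RInt_pow_odd_cos_sum.
Qed.
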